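(* Consider the Markov jump linear system $x_{t+1}=A_{\theta_t}x_t+B_{\theta_t}u_t$, $y_t=C_{\theta_t}x_t$ with modes in $W=\{1,\dots,n_\theta\}$. Let $N\in\mathbb{N}_+$ and $\alpha,\omega\in\mathbb{N}$ with $\alpha+\omega<N$. If the system is $(N,\alpha,\omega)$-mode observable, then it is also $(N+1,\alpha,\omega)$-mode observable.
   Context: Here $A_i\in\mathbb{R}^{n_x\times n_x}$, $B_i\in\mathbb{R}^{n_x\times n_u}$, $C_i\in\mathbb{R}^{n_y\times n_x}$ for $i\in W$. For $\theta=(\theta_0,\dots,\theta_T)\in W^{T+1}$, $x\in\mathbb{R}^{n_x}$ and $u=(u_0,\dots,u_{T-1})\in\mathbb{R}^{Tn_u}$, let $Y(\theta,x,u)=(C_{\theta_0}x_0,\dots,C_{\theta_T}x_T)$ with $x_0=x$, $x_{k+1}=A_{\theta_k}x_k+B_{\theta_k}u_k$. Two paths $\theta,\theta'\in W^{T+1}$ are discernible with respect to a control sequence $u\in\mathbb{R}^{Tn_u}$ if $Y(\theta,x,u)\neq Y(\theta',x',u)$ for all $x,x'\in\mathbb{R}^{n_x}$. For $N\in\mathbb{N}_+$ and $\alpha,\omega\in\mathbb{N}$ with $\alpha+\omega<N$, the system is called $(N,\alpha,\omega)$-mode observable if for all paths $\theta,\theta'\in W^{N+1}$ with $(\theta_\alpha,\dots,\theta_{N-\omega})\neq(\theta'_\alpha,\dots,\theta'_{N-\omega})$, the paths $\theta$ and $\theta'$ are discernible with respect to almost every control sequence $u\in\mathbb{R}^{Nn_u}$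 (i.e., all $u$ outside a set of Lebesgue measure zero). *)

From HB Require Import structures.
From mathcomp Require Import all_boot all_order all_algebra.
From mathcomp Require Import reals.
Set Implicit Arguments. Unset Strict Implicit. Unset Printing Implicit Defensive.
Import Order.TTheory GRing.Theory Num.Theory.
Local Open Scope ring_scope.

Definition lebesgue_null (R : realType) (I : finType) (S : (I -> R) -> Prop) : Prop :=
  forall eps : R, 0 < eps ->
  exists a b : nat -> I -> R,
    (forall n i, a n i <= b n i) /\
    (forall m, \sum_(n < m) \prod_(i : I) (b n i - a n i) <= eps) /\
    (forall v, S v -> exists n, forall i, a n i <= v i <= b n i).

Section MJLS.
Variables (R : realType) (nth nx nu ny : nat).
Variables (A : 'I_nth -> 'M[R]_nx) (B : 'I_nth -> 'M[R]_(nx, nu))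
          (C : 'I_nth -> 'M[R]_(ny, nx)).

(* A control sequence u = (u_0,...,u_{T-1}) in R^{T n_u} is a real-valued
   function on 'I_T * 'I_nu; u_k is its k-th block as a column vector
   (0 outside the range, never used). *)
Definition ctrl (T : nat) (u : 'I_T * 'I_nu -> R) (k : nat) : 'cV[R]_nu :=
  \col_j (match insub k with Some i => u (i, j) | None => 0 end).

Fixpoint state (T : nat) (theta : 'I_T.+1 -> 'I_nth) (x : 'cV[R]_nx)
    (u : 'I_T * 'I_nu -> R) (k : nat) : 'cV[R]_nx :=
  match k with
  | 0 => x
  | k'.+1 => A (theta (inord k')) *m state theta x u k'
             + B (theta (inord k')) *m ctrl u k'
  end.

Definition output (T : nat) (theta : 'I_T.+1 -> 'I_nth) (x : 'cV[R]_nx)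
    (u : 'I_T * 'I_nu -> R) : 'I_T.+1 -> 'cV[R]_ny :=
  fun k => C (theta k) *m state theta x u k.

Definition discernible (T : nat) (theta theta' : 'I_T.+1 -> 'I_nth)
    (u : 'I_T * 'I_nu -> R) : Prop :=
  forall x x' : 'cV[R]_nx, output theta x u <> output theta' x' u.

Definition mode_observable (N alpha omega : nat) : Prop :=
  forall theta theta' : 'I_N.+1 -> 'I_nth,
    (exists k : 'I_N.+1, (alpha <= k <= N - omega)%N /\ theta k <> theta' k) ->
    @lebesgue_null R ('I_N * 'I_nu)%type
      (fun u => ~ discernible theta theta' u).

End MJLS.

(* Let th, th' be paths of length N+2 that differ at a time k of the window
   [alpha, N+1-omega].  If k <= N - omega, their restrictions to the times
   0..N differ inside the window of the length-N problem; otherwise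
   k - 1 >= N - omega > alpha and the paths shifted by one time step differ at
   k - 1.  In both cases outputs that agree on the long horizon also agree on
   the short one (started from x_1, x'_1 for the shift), with the control
   restricted accordingly.  Hence the controls for which th and th' are not
   discernible lie in the preimage, under a coordinate projection
   R^((N+1) n_u) -> R^(N n_u), of a null set.  Such a cylinder is null: it is
   the countable union of its intersections with the cubes [-m, m]^J, and each
   of those is covered by the boxes covering the base, stretched by a bounded
   factor in the remaining coordinates. *)

From HB Require Import structures.
From mathcomp Require Import all_boot all_order all_algebra reals.
From mathcomp Require Import zify ring lra.
From mathcomp Require Import boolp.
Set Implicit Arguments. Unset Strict Implicit. Unset Printing Implicit Defensive.
Import Order.TTheory GRing.Theory Num.Theory.
Local Open Scope ring_scope.

Section NullSets.
Variable R : realType.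

Lemma ler_sum_uniq_subset (I : eqType) (s s' : seq I) (F : I -> R) :
  (forall i, 0 <= F i) -> uniq s -> uniq s' -> {subset s <= s'} ->
  \sum_(i <- s) F i <= \sum_(i <- s') F i.
Proof.
move=> F_ge0 uniq_s uniq_s' sub_ss'.
have -> : \sum_(i <- s) F i = \sum_(i <- s' | i \in s) F i.
  rewrite -[RHS]big_filter; apply: perm_big; apply: uniq_perm => //.
    exact: filter_uniq.
  by move=> i; rewrite mem_filter; case: (boolP (i \in s)) => // /sub_ss'.
by rewrite [leRHS](bigID (mem s)) /= lerDl sumr_ge0.
Qed.

Lemma sum_geom_half_le (eps : R) (P : nat) :
  0 <= eps -> \sum_(m < P) eps / 2 ^+ m.+1 <= eps.
Proof.
have sum_geom : \sum_(m < P) eps / 2 ^+ m.+1 = eps - eps / 2 ^+ P.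
  elim: P => [|P IH]; first by rewrite big_ord0 expr0 divr1 subrr.
  rewrite big_ord_recr /= IH exprS.
  have : (2 : R) ^+ P != 0 by rewrite expf_neq0 // pnatr_eq0.
  by move=> ?; field.
by move=> eps_ge0; rewrite sum_geom gerBl divr_ge0 // exprn_ge0.
Qed.

Lemma ler_sum_pickle_inv (V : nat * nat -> R) (eps : R) :
  (forall p, 0 <= V p) ->
  (forall P, \sum_(m < P) \sum_(n < P) V (m : nat, n : nat) <= eps) ->
  forall M, \sum_(k < M) oapp V 0 (pickle_inv k) <= eps.
Proof.
move=> V_ge0 square_le M.
set s := pmap (@pickle_inv (nat * nat)%type) (iota 0 M).
pose P := (\max_(p <- s) maxn p.1 p.2).+1.
have s_square : {subset s <= [seq (m, n) | m <- iota 0 P, n <- iota 0 P]}.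
  move=> [m n] s_mn.
  have := leq_bigmax_seq (P := xpredT) (F := fun p => maxn p.1 p.2) _ s_mn isT.
  by rewrite geq_max => /andP [le_m le_n]; apply: allpairs_f; rewrite mem_iota.
rewrite -(big_mkord (fun _ => true) (fun k => oapp V 0 (pickle_inv k))) -big_pmap.
rewrite /index_iota subn0 -/s.
apply: le_trans (ler_sum_uniq_subset V_ge0 _ _ s_square) _.
- exact: (pmap_uniq pickle_invK (iota_uniq 0 M)).
- by apply: allpairs_uniq; rewrite ?iota_uniq // => -[? ?] [? ?] _ _ [-> ->].
have iotaP : iota 0 P = index_iota 0 P by rewrite /index_iota subn0.
rewrite big_allpairs iotaP big_mkord; under eq_bigr do rewrite big_mkord.
exact: square_le.
Qed.

(* [lebesgue_null S] is convertible to
   [forall eps, 0 < eps -> exists a b, box_cover S eps a b]. *)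
Definition box_cover (I : finType) (S : (I -> R) -> Prop) (eps : R)
    (a b : nat -> I -> R) : Prop :=
  (forall n i, a n i <= b n i) /\
  (forall m, \sum_(n < m) \prod_(i : I) (b n i - a n i) <= eps) /\
  (forall v, S v -> exists n, forall i, a n i <= v i <= b n i).

Lemma lebesgue_null_sub (I : finType) (S T : (I -> R) -> Prop) :
  (forall v, T v -> S v) -> lebesgue_null S -> lebesgue_null T.
Proof.
move=> TS nullS eps eps_gt0; have [a [b [le_ab [vol cov]]]] := nullS eps eps_gt0.
by exists a, b; split; [|split] => // v /TS; exact: cov.
Qed.

Lemma lebesgue_null_card_gt0 (I : finType) (S : (I -> R) -> Prop) :
  lebesgue_null S -> (0 < #|I|)%N.
Proof.
move=> nullS; rewrite lt0n; apply/negP => /eqP /card0_eq I0.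
have [a [b [_ [vol _]]]] : exists a b, box_cover S 2^-1 a b.
  by apply: nullS; rewrite invr_gt0.
by have := vol 1%N; rewrite big_ord1 big_pred0 //; lra.
Qed.

Lemma lebesgue_null_bigcup (I : finType) (S : nat -> (I -> R) -> Prop) :
  (forall m, lebesgue_null (S m)) -> lebesgue_null (fun v => exists m, S m v).
Proof.
move=> nullS eps eps_gt0.
have I_gt0 := lebesgue_null_card_gt0 (nullS 0%N).
have /choice [ab cover] : forall m, exists ab,
    box_cover (S m) (eps / 2 ^+ m.+1) ab.1 ab.2.
  move=> m; have [|a [b cov]] := nullS m (eps / 2 ^+ m.+1); last by exists (a, b).
  by rewrite divr_gt0 // exprn_gt0.
(* Indices outside the range of [pickle] get a degenerate box, of volume 0
   since [I] is nonempty. *)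
pose box (c : nat -> nat -> I -> R) k i :=
  if pickle_inv k is Some (m, n) then c m n i else 0.
exists (box (fun m => (ab m).1)), (box (fun m => (ab m).2)); split; [|split].
- by move=> k i; rewrite /box; case: pickle_inv => [[m n]|] //; case: (cover m).
- pose V p := \prod_i ((ab p.1).2 p.2 i - (ab p.1).1 p.2 i).
  move=> M; rewrite (eq_bigr (fun k : 'I_M => oapp V 0 (pickle_inv k))) => [|k _].
    apply: ler_sum_pickle_inv => [[m n]|P].
      by apply: prodr_ge0 => i _; rewrite subr_ge0; case: (cover m).
    apply: le_trans (sum_geom_half_le P (ltW eps_gt0)).
    by apply: ler_sum => m _; case: (cover m) => _ [vol _]; exact: vol.
  rewrite /box; case: pickle_inv => [[m n]|] //=.
  by rewrite prodr_const subrr expr0n; case: #|_| I_gt0.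
- move=> v [m Smv]; have [_ [_ /(_ v Smv) [n cov_v]]] := cover m.
  by exists (pickle (m, n)); rewrite /box pickleK_inv.
Qed.

Lemma lebesgue_null_bounded_preimage (I J : finType) (f : I -> J) (r : R)
    (S : (I -> R) -> Prop) :
  injective f -> 0 < r -> lebesgue_null S ->
  lebesgue_null (fun v : J -> R => S (v \o f) /\ forall j, `|v j| <= r).
Proof.
move=> inj_f r_gt0 nullS eps eps_gt0.
pose c := (r *+ 2) ^+ #|~: f @: setT|.
have c_gt0 : 0 < c by rewrite exprn_gt0 // mulrn_wgt0.
have [a [b [le_ab [vol cov]]]] := nullS (eps / c) (divr_gt0 eps_gt0 c_gt0).
have pick_f i : [pick i' | f i' == f i] = Some i.
  by case: pickP => [i' /eqP/inj_f -> //|/(_ i)]; rewrite eqxx.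
pose ext (g : nat -> I -> R) (d : R) n j :=
  if [pick i | f i == j] is Some i then g n i else d.
exists (ext a (- r)), (ext b r); split; [|split].
- move=> n j; rewrite /ext; case: pickP => [i _|_]; first exact: le_ab.
  lra.
- move=> M.
  have vol_ext n : \prod_j (ext b r n j - ext a (- r) n j) =
                   c * \prod_i (b n i - a n i).
    rewrite (bigID (mem (f @: setT))) mulrC /=; congr (_ * _).
      rewrite big_imset /=; last exact: in2W.
      by apply: eq_big => [i|i _]; rewrite ?in_setT // /ext pick_f.
    rewrite /c -prodr_const; apply: eq_big => [j|j j_out]; first by rewrite in_setC.
    rewrite /ext; case: pickP => [i /eqP fij|_]; last by rewrite opprK mulr2n.
    by move: j_out; rewrite -fij imset_f.
  under eq_bigr do rewrite vol_ext; rewrite -mulr_sumr.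
  by rewrite -(divfK (lt0r_neq0 c_gt0) eps) mulrC ler_wpM2r // ltW.
- move=> v [Svf v_le_r]; have [n cov_n] := cov _ Svf.
  exists n => j; rewrite /ext; case: pickP => [i /eqP <-|_]; first exact: cov_n.
  by rewrite -ler_norml.
Qed.

Lemma lebesgue_null_preimage (I J : finType) (f : I -> J) (S : (I -> R) -> Prop) :
  injective f -> lebesgue_null S -> lebesgue_null (fun v : J -> R => S (v \o f)).
Proof.
move=> inj_f nullS.
have null_bounded m := lebesgue_null_bounded_preimage inj_f (ltr0Sn R m) nullS.
apply: lebesgue_null_sub (lebesgue_null_bigcup null_bounded) => v Svf.
have norm_ge0 : 0 <= \sum_j `|v j| by rewrite sumr_ge0.
exists (Num.Def.archi_bound (\sum_j `|v j|)); split=> // j.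
have le_norm : `|v j| <= \sum_j `|v j| by rewrite (bigD1 j) //= lerDl sumr_ge0.
apply: le_trans le_norm (le_trans (ltW (archi_boundP norm_ge0)) _).
by rewrite ler_nat.
Qed.

End NullSets.

Section Trajectories.
Variables (R : realType) (nth nx nu ny : nat).
Variables (A : 'I_nth -> 'M[R]_nx) (B : 'I_nth -> 'M[R]_(nx, nu))
          (C : 'I_nth -> 'M[R]_(ny, nx)).

Definition lift_time T (i0 : 'I_T.+1) (p : 'I_T * 'I_nu) : 'I_T.+1 * 'I_nu :=
  (lift i0 p.1, p.2).

Lemma lift_time_inj T (i0 : 'I_T.+1) : injective (lift_time i0).
Proof. by move=> [i j] [i' j'] /pair_equal_spec /= [/lift_inj -> ->]. Qed.

Lemma ctrl_lift_max T (u : 'I_T.+1 * 'I_nu -> R) k :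
  (k < T)%N -> ctrl (u \o lift_time ord_max) k = ctrl u k.
Proof.
move=> lt_kT; apply/matrixP => j c; rewrite !mxE.
rewrite (insubT (fun k => k < T)%N lt_kT) (insubT (fun k => k < T.+1)%N (ltnW lt_kT)).
by congr (u (_, _)); apply: val_inj; exact: lift_max.
Qed.

Lemma ctrl_lift0 T (u : 'I_T.+1 * 'I_nu -> R) k :
  ctrl (u \o lift_time ord0) k = ctrl u k.+1.
Proof.
apply/matrixP => j c; rewrite !mxE; case: (ltnP k T) => [lt_kT|le_Tk].
  rewrite (insubT (fun k => k < T)%N lt_kT).
  rewrite (@insubT _ (fun k => k < T.+1)%N _ k.+1 lt_kT).
  by congr (u (_, _)); apply: val_inj; exact: lift0.
by rewrite !insubF // ltnNge ?ltnS le_Tk.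
Qed.

Lemma stateS T (th : 'I_T.+1 -> 'I_nth) x u k :
  state A B th x u k.+1 =
  A (th (inord k)) *m state A B th x u k + B (th (inord k)) *m ctrl u k.
Proof. by []. Qed.

Lemma lift_max_inord T k :
  (k < T.+1)%N -> lift ord_max (inord k : 'I_T.+1) = inord k :> 'I_T.+2.
Proof. by move=> lt_kT; apply: ord_inj; rewrite lift_max !inordK //; lia. Qed.

Lemma lift0_inord T k :
  (k < T.+1)%N -> lift ord0 (inord k : 'I_T.+1) = inord k.+1 :> 'I_T.+2.
Proof. by move=> lt_kT; apply: ord_inj; rewrite lift0 !inordK. Qed.

Lemma state_lift_max T (th : 'I_T.+2 -> 'I_nth) x u k : (k <= T)%N ->
  state A B (th \o lift ord_max) x (u \o lift_time ord_max) k = state A B th x u k.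
Proof.
elim: k => [//|k IHk] lt_kT; have le_kT := ltnW lt_kT.
by rewrite !stateS /= lift_max_inord ?ctrl_lift_max ?IHk.
Qed.

Lemma state_lift0 T (th : 'I_T.+2 -> 'I_nth) x u k : (k <= T)%N ->
  state A B (th \o lift ord0) (state A B th x u 1) (u \o lift_time ord0) k =
  state A B th x u k.+1.
Proof.
elim: k => [//|k IHk] lt_kT; have le_kT := ltnW lt_kT.
by rewrite [LHS]stateS /= lift0_inord ?ctrl_lift0 ?IHk.
Qed.

Lemma discernible_lift_max T (th th' : 'I_T.+2 -> 'I_nth) u :
  discernible A B C (th \o lift ord_max) (th' \o lift ord_max)
    (u \o lift_time ord_max) ->
  discernible A B C th th' u.
Proof.
move=> dis x x' same_output; apply: (dis x x'); apply: funext => k.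
have := congr1 (fun y => y (lift ord_max k)) same_output.
by rewrite /output lift_max !state_lift_max // -ltnS.
Qed.

Lemma discernible_lift0 T (th th' : 'I_T.+2 -> 'I_nth) u :
  discernible A B C (th \o lift ord0) (th' \o lift ord0) (u \o lift_time ord0) ->
  discernible A B C th th' u.
Proof.
move=> dis x x' same_output.
apply: (dis (state A B th x u 1) (state A B th' x' u 1)).
apply: funext => k.
have := congr1 (fun y => y (lift ord0 k)) same_output.
by rewrite /output lift0 !state_lift0 // -ltnS.
Qed.

Lemma lebesgue_null_indiscernible_lift N alpha omega (i0 : 'I_N.+2) (j0 : 'I_N.+1)
    (k : 'I_N.+1) (th th' : 'I_N.+2 -> 'I_nth) :
  mode_observable A B C N alpha omega ->
  (alpha <= k <= N - omega)%N -> th (lift i0 k) <> th' (lift i0 k) ->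
  (forall u, discernible A B C (th \o lift i0) (th' \o lift i0) (u \o lift_time j0) ->
             discernible A B C th th' u) ->
  lebesgue_null (fun u => ~ discernible A B C th th' u).
Proof.
move=> obsN range_k neq_k dis_lift.
have separated : exists k' : 'I_N.+1,
    (alpha <= k' <= N - omega)%N /\ (th \o lift i0) k' <> (th' \o lift i0) k'.
  by exists k.
have := lebesgue_null_preimage (lift_time_inj (i0 := j0)) (obsN _ _ separated).
by apply: lebesgue_null_sub => u; apply: contra_not; exact: dis_lift.
Qed.

End Trajectories.

Theorem lemma3 (R : realType) (nth nx nu ny : nat)
    (A : 'I_nth -> 'M[R]_nx) (B : 'I_nth -> 'M[R]_(nx, nu))
    (C : 'I_nth -> 'M[R]_(ny, nx)) (N alpha omega : nat) :
  (0 < N)%N -> (alpha + omega < N)%N ->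
  mode_observable A B C N alpha omega ->
  mode_observable A B C N.+1 alpha omega.
Proof.
move=> _ lt_aoN obsN th th' [k [/andP [le_ak le_kNo] neq_k]].
have [le_kNo' | lt_Nok] := leqP k (N - omega).
  have lift_k : lift ord_max (inord k : 'I_N.+1) = k.
    by apply: ord_inj; rewrite lift_max inordK //; lia.
  apply: (lebesgue_null_indiscernible_lift (i0 := ord_max) (j0 := ord_max)
            (k := inord k) obsN).
  - by rewrite inordK //; lia.
  - by rewrite lift_k.
  - exact: discernible_lift_max.
have lift_k : lift ord0 (inord k.-1 : 'I_N.+1) = k.
  by apply: ord_inj; rewrite lift0 inordK //; lia.
apply: (lebesgue_null_indiscernible_lift (i0 := ord0) (j0 := ord0)
          (k := inord k.-1) obsN).
- by rewrite inordK //; lia.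
- by rewrite lift_k.
- exact: discernible_lift0.
Qed.
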